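(* Let $\alpha\in[0,1]$ be irrational, $n\geq 2$, and $\alpha_n=\frac{p_n}{q_n}$ the $n$-th rational approximant to $\alpha$. Let $k_0\in\mathbb{Z}$ with $q_{n-1}\ge|k_0|$ and set $\theta:=k_0\alpha\bmod 1$. Then for all $-q_n+1\le k\le q_n-2$: (a) if $k_0>0$ and $n$ is even, $v_{\alpha_n,\theta}(k)=v_{\alpha,\theta}(k)$; (b) if $k_0>0$ and $n$ is odd, $v_{\alpha_n,\theta}(k)=\widetilde v_{\alpha,\theta}(k)$; (c) if $k_0<0$ and $n$ is even, $v_{\alpha_n,\theta}(k)=\widetilde v_{\alpha,\theta}(k)$; (d) if $k_0<0$ and $n$ is odd, $v_{\alpha_n,\theta}(k)=v_{\alpha,\theta}(k)$.
   Context: For $\beta\in[0,1]$, $\theta\in[0,1)$: $v_{\beta,\theta}(k)=\chi_{[1-\beta,1)}(k\beta+\theta\bmod 1)$ and $\widetilde v_{\beta,\theta}(k)=\chi_{(1-\beta,1]\cup\{0\}}(k\beta+\theta\bmod 1)$. Rational approximants: for $\alpha=[a_1,a_2,\dots]$, $p_{-1}=1,p_0=0,p_n=a_np_{n-1}+p_{n-2}$, $q_{-1}=0,q_0=1,q_n=a_nq_{n-1}+q_{n-2}$, $\alpha_n=p_n/q_n$. *)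

From Stdlib Require Import Reals ZArith.
Open Scope R_scope.

Definition frac (x : R) : R := x - IZR (Int_part x).

Fixpoint gauss (alpha : R) (m : nat) : R :=
  match m with
  | O => alpha
  | S m' => frac (/ gauss alpha m')
  end.

(* continued fraction digit a_m (m >= 1): alpha = [a_1, a_2, ...]
   = 1/(a_1 + 1/(a_2 + ...)) *)
Definition cf_a (alpha : R) (m : nat) : Z := Int_part (/ gauss alpha (m - 1)).

(* (p_{m-1}, p_m, q_{m-1}, q_m) *)
Fixpoint pq (alpha : R) (m : nat) : Z * Z * Z * Z :=
  match m with
  | O => (1%Z, 0%Z, 0%Z, 1%Z)
  | S m' =>
      let '(pp, p, qq, q) := pq alpha m' in
      let a := cf_a alpha (S m') in
      (p, (a * p + pp)%Z, q, (a * q + qq)%Z)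
  end.

Definition cf_p (alpha : R) (m : nat) : Z := let '(_, p, _, _) := pq alpha m in p.
Definition cf_q (alpha : R) (m : nat) : Z := let '(_, _, _, q) := pq alpha m in q.

Definition approx (alpha : R) (m : nat) : R := IZR (cf_p alpha m) / IZR (cf_q alpha m).

Definition irrational (x : R) : Prop :=
  ~ exists (a b : Z), b <> 0%Z /\ x = IZR a / IZR b.

Definition v (beta theta : R) (k : Z) : R :=
  let x := frac (IZR k * beta + theta) in
  if Rle_dec (1 - beta) x then (if Rlt_dec x 1 then 1 else 0) else 0.

Definition vt (beta theta : R) (k : Z) : R :=
  let x := frac (IZR k * beta + theta) in
  if Rlt_dec (1 - beta) x then (if Rle_dec x 1 then 1 else 0)
  else if Req_EM_T x 0 then 1 else 0.

From Stdlib Require Import Reals ZArith Lra Lia Psatz.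
Open Scope R_scope.

(* Write [v_{b,t}(k)] as the floor difference [floor((k+1)b + t) - floor(kb + t)]
   and [vt] as the same ceiling difference. Let [d = q_n alpha - p_n]. For
   [|j| < q_n] the points [j alpha_n + t] and [j alpha + t] are [|j d| / q_n < |d|]
   apart. Since [t = k0 alpha mod 1], the point [j alpha + t] is [(j + k0) alpha]
   modulo an integer, and as [0 < |j + k0| < q_(n+1)] the best approximation
   property of [q_n] keeps it at distance at least [|d|] from the integers: the two
   floors agree, and the ceiling of the non-integer [j alpha + t] is that floor
   plus one. The single exception is [j = -k0], where [j alpha + t] is an
   integer and [j alpha_n + t] lies just above or just below it according to the
   sign of [k0 d], that is of [k0 (-1)^n]; this is what selects [v] or [vt]. *)

Definition Int_ceil (r : R) : Z := (- Int_part (- r))%Z.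

Lemma Int_part_eq (r : R) (m : Z) : IZR m <= r < IZR m + 1 -> Int_part r = m.
Proof. intros H. symmetry. apply Int_part_spec. lra. Qed.

Lemma Int_part_bounds (r : R) : IZR (Int_part r) <= r < IZR (Int_part r) + 1.
Proof. destruct (base_Int_part r). lra. Qed.

Lemma Int_ceil_eq (r : R) (m : Z) : IZR m - 1 < r <= IZR m -> Int_ceil r = m.
Proof.
  intros H. unfold Int_ceil. rewrite (Int_part_eq (- r) (- m)); [lia|].
  rewrite opp_IZR. lra.
Qed.

Lemma v_Int_part (beta theta : R) (k : Z) : 0 <= beta <= 1 ->
  v beta theta k
  = IZR (Int_part (IZR (k + 1) * beta + theta) - Int_part (IZR k * beta + theta)).
Proof.
  intros Hb. unfold v, frac. rewrite plus_IZR.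
  set (x := IZR k * beta + theta).
  replace ((IZR k + 1) * beta + theta) with (x + beta) by (unfold x; ring).
  destruct (Int_part_bounds x). set (m := Int_part x) in *.
  destruct (Rle_dec (1 - beta) (x - IZR m)).
  - destruct (Rlt_dec (x - IZR m) 1); [|lra].
    rewrite (Int_part_eq (x + beta) (m + 1)); [f_equal; lia | rewrite plus_IZR; lra].
  - rewrite (Int_part_eq (x + beta) m); [f_equal; lia | lra].
Qed.

Lemma vt_Int_ceil (beta theta : R) (k : Z) : 0 < beta <= 1 ->
  vt beta theta k
  = IZR (Int_ceil (IZR (k + 1) * beta + theta) - Int_ceil (IZR k * beta + theta)).
Proof.
  intros Hb. unfold vt, frac. rewrite plus_IZR.
  set (x := IZR k * beta + theta).
  replace ((IZR k + 1) * beta + theta) with (x + beta) by (unfold x; ring).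
  destruct (Int_part_bounds x). set (m := Int_part x) in *.
  destruct (Rlt_dec (1 - beta) (x - IZR m)).
  - destruct (Rle_dec (x - IZR m) 1); [|lra].
    rewrite (Int_ceil_eq (x + beta) (m + 2)), (Int_ceil_eq x (m + 1));
      [f_equal; lia | rewrite plus_IZR; lra ..].
  - destruct (Req_EM_T (x - IZR m) 0).
    + rewrite (Int_ceil_eq (x + beta) (m + 1)), (Int_ceil_eq x m);
        [f_equal; lia | lra | rewrite plus_IZR; lra].
    + rewrite (Int_ceil_eq (x + beta) (m + 1)), (Int_ceil_eq x (m + 1));
        [f_equal; lia | rewrite plus_IZR; lra ..].
Qed.

Lemma Int_part_perturb (x y delta : R) :
  (forall c : Z, delta <= Rabs (x - IZR c)) -> Rabs (y - x) < delta ->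
  Int_part y = Int_part x.
Proof.
  intros Hx Hyx. destruct (Int_part_bounds x). set (m := Int_part x) in *.
  pose proof (Hx m) as Hm. pose proof (Hx (m + 1)%Z) as Hm1. rewrite plus_IZR in Hm1.
  apply Int_part_eq. revert Hyx Hm Hm1. unfold Rabs. repeat destruct Rcase_abs; lra.
Qed.

Lemma Int_ceil_away (x delta : R) : 0 < delta ->
  (forall c : Z, delta <= Rabs (x - IZR c)) -> Int_ceil x = (Int_part x + 1)%Z.
Proof.
  intros Hdelta Hx. destruct (Int_part_bounds x). set (m := Int_part x) in *.
  pose proof (Hx m) as Hm. apply Int_ceil_eq. rewrite plus_IZR.
  revert Hm. unfold Rabs. destruct Rcase_abs; lra.
Qed.

Lemma Rabs_le_plus_same_sign (a b : R) : 0 <= a * b -> Rabs a <= Rabs (a + b).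
Proof. unfold Rabs. repeat destruct Rcase_abs; nra. Qed.

Lemma Rabs_le_IZR_mult (u : Z) (x : R) : u <> 0%Z -> Rabs x <= Rabs (IZR u * x).
Proof.
  intros Hu. rewrite Rabs_mult, Rabs_Zabs.
  assert (1 <= IZR (Z.abs u)) by (apply IZR_le; lia).
  pose proof (Rabs_pos x). nra.
Qed.

(* Writing [(i, c) = u (q, p) + w (q', p')], which is possible because the
   determinant is [+-1], the constraint [|i| < q'] forces [u] and [w] to have
   opposite signs, so that the two terms of [u d + w d'] have the same sign. *)
Lemma lattice_best_approx (alpha : R) (p q p' q' i c : Z) :
  (0 <= q)%Z -> Z.abs (p' * q - p * q') = 1%Z ->
  (IZR q * alpha - IZR p) * (IZR q' * alpha - IZR p') < 0 ->
  i <> 0%Z -> (Z.abs i < q')%Z ->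
  Rabs (IZR q * alpha - IZR p) <= Rabs (IZR i * alpha - IZR c).
Proof.
  intros Hq Hdet Hsign Hi Hiq'.
  set (D := (p' * q - p * q')%Z) in Hdet.
  assert (HD2 : (D * D = 1)%Z) by (destruct (Z.abs_spec D); lia).
  set (u := (D * (p' * i - q' * c))%Z). set (w := (D * (q * c - p * i))%Z).
  assert (Ei : (u * q + w * q' = i)%Z).
  { transitivity (D * D * i)%Z; [unfold u, w, D; ring | rewrite HD2; ring]. }
  assert (Ec : (u * p + w * p' = c)%Z).
  { transitivity (D * D * c)%Z; [unfold u, w, D; ring | rewrite HD2; ring]. }
  set (d := IZR q * alpha - IZR p) in *. set (d' := IZR q' * alpha - IZR p') in *.
  assert (E : IZR i * alpha - IZR c = IZR u * d + IZR w * d').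
  { rewrite <- Ei, <- Ec. unfold d, d'. rewrite !plus_IZR, !mult_IZR. ring. }
  rewrite E. clearbody u w.
  destruct (Z.eq_dec w 0) as [->|Hw].
  - rewrite Rmult_0_l, Rplus_0_r. apply Rabs_le_IZR_mult. intros ->. lia.
  - assert (Huw : (u * w < 0)%Z).
    { destruct (Z.abs_spec i), (Z_lt_le_dec u 0), (Z_lt_le_dec w 0); nia. }
    assert (Hu : u <> 0%Z) by (intros ->; lia).
    apply IZR_lt in Huw. rewrite mult_IZR in Huw.
    eapply Rle_trans; [exact (Rabs_le_IZR_mult u d Hu) |].
    apply Rabs_le_plus_same_sign. nra.
Qed.

Section RationalShift.

Variables (alpha : R) (p q Q k0 : Z).
Let d := IZR q * alpha - IZR p.
Let beta := IZR p / IZR q.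
Let theta := frac (IZR k0 * alpha).
Hypotheses (Halpha : 0 < alpha < 1) (Hq : (1 <= q)%Z) (Hk0 : (Z.abs k0 <= q)%Z)
  (HQ : (Z.abs k0 + q <= Q)%Z) (Hd : Rabs d < 1)
  (Hbest : forall i c : Z, i <> 0%Z -> (Z.abs i < Q)%Z ->
     Rabs d <= Rabs (IZR i * alpha - IZR c)).

Lemma beta_bounds : 0 <= beta <= 1.
Proof.
  assert (HqR : 1 <= IZR q) by (apply IZR_le; lia).
  apply Rabs_def2 in Hd. unfold d in Hd.
  assert (Hp1 : IZR (-1) < IZR p) by nra.
  assert (Hp2 : IZR p < IZR (q + 1)) by (rewrite plus_IZR; nra).
  apply lt_IZR in Hp1, Hp2.
  assert (0 <= IZR p <= IZR q) by (split; apply IZR_le; lia).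
  assert (0 < / IZR q) by (apply Rinv_0_lt_compat; lra).
  unfold beta, Rdiv. split.
  - apply Rmult_le_pos; lra.
  - apply Rmult_le_reg_r with (IZR q); [lra|].
    rewrite Rmult_assoc, Rinv_l; lra.
Qed.

Lemma shift_gap (j : Z) :
  IZR j * beta + theta - (IZR j * alpha + theta) = - IZR j / IZR q * d.
Proof. unfold beta, d. field. apply not_0_IZR. lia. Qed.

Lemma Int_part_shift_origin :
  (0 < IZR k0 * d ->
     Int_part (IZR (- k0) * beta + theta) = Int_part (IZR (- k0) * alpha + theta)) /\
  (IZR k0 * d < 0 ->
     Int_part (IZR (- k0) * beta + theta)
     = (Int_ceil (IZR (- k0) * alpha + theta) - 1)%Z).
Proof.
  set (c := Int_part (IZR k0 * alpha)).
  assert (HqR : 1 <= IZR q) by (apply IZR_le; lia).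
  assert (Hx : IZR (- k0) * alpha + theta = IZR (- c)).
  { unfold theta, frac. fold c. rewrite !opp_IZR. ring. }
  set (e := IZR k0 * d / IZR q).
  assert (He : IZR k0 * d = e * IZR q) by (unfold e; field; lra).
  assert (Hy : IZR (- k0) * beta + theta = IZR (- c) + e).
  { rewrite <- Hx. pose proof (shift_gap (- k0)) as G. rewrite opp_IZR in *.
    unfold e.
    replace (- - IZR k0 / IZR q * d) with (IZR k0 * d / IZR q) in G by (field; lra).
    lra. }
  assert (Hkd : Rabs (IZR k0 * d) < IZR q).
  { rewrite Rabs_mult, Rabs_Zabs.
    assert (0 <= IZR (Z.abs k0) <= IZR q) by (split; apply IZR_le; lia).
    pose proof (Rabs_pos d). nra. }
  apply Rabs_def2 in Hkd. rewrite He in Hkd.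
  rewrite Hx, Hy. split; intros Hs; rewrite He in Hs.
  - rewrite (Int_part_eq (IZR (- c)) (- c)) by lra. apply Int_part_eq. nra.
  - rewrite (Int_ceil_eq (IZR (- c)) (- c)) by lra. apply Int_part_eq.
    rewrite minus_IZR. nra.
Qed.

Lemma shift_away_from_Z (j : Z) : (j + k0 <> 0)%Z -> (Z.abs j < q)%Z ->
  forall c : Z, Rabs d <= Rabs (IZR j * alpha + theta - IZR c).
Proof.
  intros Hj0 Hjq c. unfold theta, frac.
  replace (IZR j * alpha + (IZR k0 * alpha - IZR (Int_part (IZR k0 * alpha))) - IZR c)
    with (IZR (j + k0) * alpha - IZR (c + Int_part (IZR k0 * alpha)))
    by (rewrite !plus_IZR; ring).
  apply Hbest; lia.
Qed.

Lemma shift_gap_lt (j : Z) : (Z.abs j < q)%Z -> d <> 0 ->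
  Rabs (IZR j * beta + theta - (IZR j * alpha + theta)) < Rabs d.
Proof.
  intros Hjq Hd0. rewrite shift_gap, Rabs_mult.
  assert (HqR : 1 <= IZR q) by (apply IZR_le; lia).
  assert (Hj : Rabs (- IZR j / IZR q) < 1).
  { assert (Hjq' : Rabs (IZR j) < IZR q) by (rewrite Rabs_Zabs; apply IZR_lt; lia).
    unfold Rdiv. rewrite Rabs_mult, Rabs_Ropp, Rabs_inv, (Rabs_right (IZR q)) by lra.
    apply Rmult_lt_reg_r with (IZR q); [lra|].
    rewrite Rmult_assoc, Rinv_l; lra. }
  pose proof (Rabs_pos_lt d Hd0). pose proof (Rabs_pos (- IZR j / IZR q)). nra.
Qed.

Lemma Int_part_shift (j : Z) : (Z.abs j < q)%Z ->
  (0 < IZR k0 * d ->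
     Int_part (IZR j * beta + theta) = Int_part (IZR j * alpha + theta)) /\
  (IZR k0 * d < 0 ->
     Int_part (IZR j * beta + theta) = (Int_ceil (IZR j * alpha + theta) - 1)%Z).
Proof.
  intros Hjq. destruct (Z.eq_dec (j + k0) 0) as [Hj0|Hj0].
  - replace j with (- k0)%Z by lia. exact Int_part_shift_origin.
  - assert (Hfloor : d <> 0 ->
      Int_part (IZR j * beta + theta) = Int_part (IZR j * alpha + theta)).
    { intros Hd0. apply Int_part_perturb with (Rabs d);
        [exact (shift_away_from_Z j Hj0 Hjq) | exact (shift_gap_lt j Hjq Hd0)]. }
    assert (Hceil : d <> 0 ->
      Int_ceil (IZR j * alpha + theta) = (Int_part (IZR j * alpha + theta) + 1)%Z).
    { intros Hd0. apply Int_ceil_away with (Rabs d);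
        [exact (Rabs_pos_lt d Hd0) | exact (shift_away_from_Z j Hj0 Hjq)]. }
    split; intros Hs; (assert (Hd0 : d <> 0) by (intros E; rewrite E in Hs; lra));
      rewrite (Hfloor Hd0); [reflexivity | rewrite (Hceil Hd0); lia].
Qed.

Lemma v_shift (k : Z) : (- q + 1 <= k <= q - 2)%Z ->
  (0 < IZR k0 * d -> v beta theta k = v alpha theta k) /\
  (IZR k0 * d < 0 -> v beta theta k = vt alpha theta k).
Proof.
  intros Hk. pose proof beta_bounds.
  rewrite (v_Int_part beta), (v_Int_part alpha), (vt_Int_ceil alpha) by lra.
  destruct (Int_part_shift k) as [Hk1 Hk2]; [lia|].
  destruct (Int_part_shift (k + 1)) as [Hk3 Hk4]; [lia|].
  split; intros Hs.
  - now rewrite (Hk1 Hs), (Hk3 Hs).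
  - rewrite (Hk2 Hs), (Hk4 Hs). f_equal. lia.
Qed.

End RationalShift.

Lemma irrational_neq_IZR (x : R) (c : Z) : irrational x -> x <> IZR c.
Proof. intros Hx ->. apply Hx. exists c, 1%Z. split; [lia | field]. Qed.

Lemma irrational_inv (x : R) : irrational x -> irrational (/ x).
Proof.
  intros Hx [a [b [Hb E]]].
  assert (Hx0 : x <> 0) by exact (irrational_neq_IZR x 0 Hx).
  assert (Ha : a <> 0%Z).
  { intros ->. apply (Rinv_neq_0_compat x Hx0). rewrite E. field. now apply not_0_IZR. }
  apply Hx. exists b, a. split; [exact Ha|].
  rewrite <- (Rinv_inv x), E. field. split; now apply not_0_IZR.
Qed.

Lemma irrational_sub_IZR (x : R) (c : Z) : irrational x -> irrational (x - IZR c).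
Proof.
  intros Hx [a [b [Hb E]]]. apply Hx. exists (a + c * b)%Z, b. split; [exact Hb|].
  rewrite plus_IZR, mult_IZR. apply not_0_IZR in Hb.
  replace x with (x - IZR c + IZR c) by ring. rewrite E. field. exact Hb.
Qed.

Lemma irrational_gauss (alpha : R) (m : nat) :
  irrational alpha -> irrational (gauss alpha m).
Proof.
  intros H. induction m as [|m IH]; [exact H|].
  apply irrational_sub_IZR, irrational_inv, IH.
Qed.

Lemma pq_S (alpha : R) (m : nat) :
  pq alpha (S m)
  = let '(pp, p, qq, q) := pq alpha m in
    (p, (cf_a alpha (S m) * p + pp)%Z, q, (cf_a alpha (S m) * q + qq)%Z).
Proof. reflexivity. Qed.

Lemma pq_succ (alpha : R) (m : nat) :
  pq alpha (S m) = (cf_p alpha m, cf_p alpha (S m), cf_q alpha m, cf_q alpha (S m)).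
Proof.
  unfold cf_p, cf_q. rewrite pq_S. now destruct (pq alpha m) as [[[pp p] qq] q].
Qed.

Lemma cf_p_SS (alpha : R) (m : nat) :
  cf_p alpha (S (S m)) = (cf_a alpha (S (S m)) * cf_p alpha (S m) + cf_p alpha m)%Z.
Proof. unfold cf_p at 1. rewrite (pq_S alpha (S m)), pq_succ. reflexivity. Qed.

Lemma cf_q_SS (alpha : R) (m : nat) :
  cf_q alpha (S (S m)) = (cf_a alpha (S (S m)) * cf_q alpha (S m) + cf_q alpha m)%Z.
Proof. unfold cf_q at 1. rewrite (pq_S alpha (S m)), pq_succ. reflexivity. Qed.

Lemma gauss_S (alpha : R) (m : nat) :
  gauss alpha (S m) = / gauss alpha m - IZR (cf_a alpha (S m)).
Proof. unfold cf_a. rewrite Nat.sub_succ, Nat.sub_0_r. reflexivity. Qed.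

Definition cf_err (alpha : R) (m : nat) : R :=
  IZR (cf_q alpha m) * alpha - IZR (cf_p alpha m).

Lemma cf_err_SS (alpha : R) (m : nat) :
  cf_err alpha (S (S m))
  = IZR (cf_a alpha (S (S m))) * cf_err alpha (S m) + cf_err alpha m.
Proof. unfold cf_err. rewrite cf_p_SS, cf_q_SS, !plus_IZR, !mult_IZR. ring. Qed.

Lemma cf_det (alpha : R) (m : nat) :
  (cf_p alpha (S m) * cf_q alpha m - cf_p alpha m * cf_q alpha (S m))%Z
  = if Nat.even m then 1%Z else (-1)%Z.
Proof.
  induction m as [|m IH]; [cbn; lia|].
  rewrite cf_p_SS, cf_q_SS, Nat.even_succ, <- Nat.negb_even.
  transitivity (- (cf_p alpha (S m) * cf_q alpha m - cf_p alpha m * cf_q alpha (S m)))%Z;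
    [ring|].
  rewrite IH. now destruct (Nat.even m).
Qed.

Section ContinuedFraction.

Variable alpha : R.
Hypotheses (Halpha : 0 <= alpha <= 1) (Hirr : irrational alpha).

Lemma alpha_bounds : 0 < alpha < 1.
Proof.
  pose proof (irrational_neq_IZR alpha 0 Hirr).
  pose proof (irrational_neq_IZR alpha 1 Hirr). lra.
Qed.

Lemma gauss_bounds (m : nat) : 0 < gauss alpha m < 1.
Proof.
  destruct m as [|m]; [exact alpha_bounds|].
  pose proof (irrational_neq_IZR _ 0 (irrational_gauss alpha (S m) Hirr)).
  destruct (Int_part_bounds (/ gauss alpha m)).
  change (gauss alpha (S m)) with (frac (/ gauss alpha m)) in *. unfold frac in *. lra.
Qed.

Lemma cf_a_pos (m : nat) : (1 <= cf_a alpha (S m))%Z.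
Proof.
  pose proof (gauss_bounds m). pose proof (gauss_bounds (S m)).
  assert (1 < / gauss alpha m).
  { rewrite <- Rinv_1. apply Rinv_lt_contravar; [rewrite Rmult_1_r|]; lra. }
  rewrite gauss_S in *.
  assert (Ha : 0 < IZR (cf_a alpha (S m))) by lra. apply lt_IZR in Ha. lia.
Qed.

Lemma cf_q_mono (m : nat) : (1 <= cf_q alpha m <= cf_q alpha (S m))%Z.
Proof.
  induction m as [|m IH].
  - pose proof (cf_a_pos 0). cbn. lia.
  - rewrite cf_q_SS. pose proof (cf_a_pos (S m)). nia.
Qed.

Lemma cf_q_SS_ge (m : nat) : (cf_q alpha (S m) + cf_q alpha m <= cf_q alpha (S (S m)))%Z.
Proof.
  rewrite cf_q_SS. pose proof (cf_a_pos (S m)). pose proof (cf_q_mono m). nia.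
Qed.

Lemma cf_err_S (m : nat) : cf_err alpha (S m) = - gauss alpha (S m) * cf_err alpha m.
Proof.
  induction m as [|m IH].
  - pose proof alpha_bounds. rewrite gauss_S. unfold cf_err. cbn.
    rewrite Z.mul_1_r, Z.mul_0_r, Z.add_0_r, Z.add_0_l. field. lra.
  - pose proof (gauss_bounds (S m)).
    rewrite cf_err_SS, (gauss_S alpha (S m)), IH. field. lra.
Qed.

Lemma cf_err_sign (m : nat) :
  if Nat.even m then 0 < cf_err alpha m else cf_err alpha m < 0.
Proof.
  induction m as [|m IH].
  - pose proof alpha_bounds. unfold cf_err. cbn. lra.
  - rewrite cf_err_S, Nat.even_succ, <- Nat.negb_even. pose proof (gauss_bounds (S m)).
    destruct (Nat.even m); cbn [negb]; nra.
Qed.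

Lemma cf_err_neq0 (m : nat) : cf_err alpha m <> 0.
Proof. pose proof (cf_err_sign m). destruct (Nat.even m); lra. Qed.

Lemma cf_err_abs_lt1 (m : nat) : Rabs (cf_err alpha m) < 1.
Proof.
  induction m as [|m IH].
  - pose proof alpha_bounds. unfold cf_err. cbn. rewrite Rabs_right; lra.
  - pose proof (gauss_bounds (S m)). pose proof (Rabs_pos (cf_err alpha m)).
    rewrite cf_err_S, Rabs_mult, Rabs_Ropp, (Rabs_right (gauss alpha (S m))); nra.
Qed.

Lemma cf_best_approx (m : nat) (i c : Z) : i <> 0%Z -> (Z.abs i < cf_q alpha (S m))%Z ->
  Rabs (cf_err alpha m) <= Rabs (IZR i * alpha - IZR c).
Proof.
  intros Hi Hiq.
  apply lattice_best_approx with (p' := cf_p alpha (S m)) (q' := cf_q alpha (S m));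
    [pose proof (cf_q_mono m); lia | rewrite cf_det; now destruct (Nat.even m) | |
     exact Hi | exact Hiq].
  fold (cf_err alpha m) (cf_err alpha (S m)). rewrite cf_err_S.
  pose proof (gauss_bounds (S m)). pose proof (cf_err_neq0 m).
  assert (0 < cf_err alpha m * cf_err alpha m) by (apply Rsqr_pos_lt; assumption). nra.
Qed.

Lemma v_approx (m : nat) (k0 k : Z) : (Z.abs k0 <= cf_q alpha m)%Z ->
  (- cf_q alpha (S m) + 1 <= k <= cf_q alpha (S m) - 2)%Z ->
  let theta := frac (IZR k0 * alpha) in
  (0 < IZR k0 * cf_err alpha (S m) -> v (approx alpha (S m)) theta k = v alpha theta k) /\
  (IZR k0 * cf_err alpha (S m) < 0 -> v (approx alpha (S m)) theta k = vt alpha theta k).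
Proof.
  intros Hk0 Hk. pose proof (cf_q_mono m). pose proof (cf_q_SS_ge m).
  apply (v_shift alpha (cf_p alpha (S m)) (cf_q alpha (S m)) (cf_q alpha (S (S m))) k0);
    [exact alpha_bounds | lia | lia | lia | apply cf_err_abs_lt1 | | exact Hk].
  intros i c Hi Hiq. now apply cf_best_approx.
Qed.

End ContinuedFraction.

Theorem lemma4p9 (alpha : R) (n : nat) (k0 : Z) :
  0 <= alpha <= 1 -> irrational alpha -> (2 <= n)%nat ->
  (Z.abs k0 <= cf_q alpha (n - 1))%Z ->
  let theta := frac (IZR k0 * alpha) in
  forall k : Z, (- cf_q alpha n + 1 <= k <= cf_q alpha n - 2)%Z ->
    ((0 < k0)%Z -> Nat.even n = true -> v (approx alpha n) theta k = v alpha theta k) /\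
    ((0 < k0)%Z -> Nat.even n = false -> v (approx alpha n) theta k = vt alpha theta k) /\
    ((k0 < 0)%Z -> Nat.even n = true -> v (approx alpha n) theta k = vt alpha theta k) /\
    ((k0 < 0)%Z -> Nat.even n = false -> v (approx alpha n) theta k = v alpha theta k).
Proof.
  intros Halpha Hirr Hn Hk0 theta k Hk.
  destruct n as [|m]; [lia|].
  rewrite Nat.sub_succ, Nat.sub_0_r in Hk0.
  destruct (v_approx alpha Halpha Hirr m k0 k Hk0 Hk) as [Hpos Hneg].
  pose proof (cf_err_sign alpha Halpha Hirr (S m)) as Hsign.
  repeat split; intros Hs%IZR_lt Hparity; rewrite Hparity in Hsign;
    [apply Hpos | apply Hneg | apply Hneg | apply Hpos]; nra.
Qed.
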